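(* Let $Q$ be a finite poset, $X_Q$ its cube complex, and let $C(I_i,M_i)$ and $C(I_{i+1},M_{i+1})$ be consecutive cubes $P_i, P_{i+1}$ of a valid cube sequence in $X_Q$. Then every maximal cube of the interval $X[P_i,P_{i+1}]$ contains the vertex corresponding to the order ideal $I_i$.
   Context: For a finite poset $Q$, $X_Q$ is the cube complex whose vertices are the order ideals of $Q$ and with a cube $C(I,M)$ for each order ideal $I$ and subset $M$ of the set of maximal elements of $I$, whose vertices are $I\setminus S$, $S\subseteq M$. A valid cube sequence is a sequence of cubes $C(I_1,M_1),\dots,C(I_k,M_k)$ of $X_Q$ such that (a) $I_1\subset\cdots\subset I_k=Q$; (b) $I_1=M_1$ and $I_j\setminus I_{j-1}\subseteq M_j$ for $1<j\le k$; (c) each $M_j$ is a maximal antichain of $Q$. For cubes $C,D$, the interval $X[C,D]$ is the subcomplex consisting of all cubes all of whose vertices lie on at least one edge geodesic (shortest path along edges) between a vertex of $C$ and a vertex of $D$. *)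

From mathcomp Require Import all_boot all_order.
Set Implicit Arguments. Unset Strict Implicit. Unset Printing Implicit Defensive.
Import Order.Theory.
Local Open Scope order_scope.

Section CubeComplex.
Variables (d : Order.disp_t) (Q : finPOrderType d).

Definition order_ideal (I : {set Q}) : bool :=
  [forall x, forall y, ((y <= x) && (x \in I)) ==> (y \in I)].

Definition maxel (I : {set Q}) : {set Q} :=
  [set x in I | [forall y in I, ~~ (x < y)]].

Definition antichain (A : {set Q}) : bool :=
  [forall x in A, forall y in A, (x >=< y) ==> (x == y)].

Definition max_antichain (A : {set Q}) : Prop :=
  antichain A /\ forall B : {set Q}, antichain B -> A \subset B -> B = A.

(* a cube C(I,M) is encoded as the pair (I,M) *)
Definition cube := ({set Q} * {set Q})%type.

Definition is_cube (c : cube) : bool := order_ideal c.1 && (c.2 \subset maxel c.1).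

Definition cube_vertices (c : cube) : {set {set Q}} :=
  [set c.1 :\: S | S in powerset c.2].

Definition adj : rel {set Q} := fun J J' =>
  [exists c : cube, [&& is_cube c, #|c.2| == 1%N & cube_vertices c == [set J; J']]
                    && (J != J')].

Definition epath (u : {set Q}) (p : seq {set Q}) (v : {set Q}) : Prop :=
  path adj u p /\ last u p = v.

Definition geodesic (u : {set Q}) (p : seq {set Q}) (v : {set Q}) : Prop :=
  epath u p v /\ forall q, epath u q v -> (size p <= size q)%N.

Definition on_geodesic (x u v : {set Q}) : Prop :=
  exists p, geodesic u p v /\ x \in u :: p.

Definition in_interval (C D E : cube) : Prop :=
  is_cube E /\
  forall x, x \in cube_vertices E ->
    exists a b, [/\ a \in cube_vertices C, b \in cube_vertices D & on_geodesic x a b].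

(* a maximal cube of X[C,D] (cubes ordered by inclusion, i.e. being a face) *)
Definition maximal_in_interval (C D E : cube) : Prop :=
  in_interval C D E /\
  forall E', in_interval C D E' -> cube_vertices E \subset cube_vertices E' ->
    cube_vertices E' = cube_vertices E.

(* valid cube sequence C(I_1,M_1),...,C(I_k,M_k), stored 0-indexed *)
Definition valid_cube_seq (s : seq cube) : Prop :=
  let I j := (nth (set0, set0) s j).1 in
  let M j := (nth (set0, set0) s j).2 in
  [/\ (0 < size s)%N,
      all is_cube s,
      (* (a) *) sorted (fun A B : {set Q} => A \proper B) (map fst s)
                /\ I (size s).-1 = [set: Q],
      (* (b) *) I 0 = M 0 /\ (forall j, (0 < j < size s)%N -> I j :\: I j.-1 \subset M j)
    & (* (c) *) forall j, (j < size s)%N -> max_antichain (M j)].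

End CubeComplex.

From mathcomp Require Import all_boot all_order.
From mathcomp Require Import zify.
Set Implicit Arguments. Unset Strict Implicit. Unset Printing Implicit Defensive.
Import Order.Theory.

(* Vertices of X_Q are order ideals and an edge adds or removes one element, so the
   edge distance between ideals is the size of their symmetric difference, and an
   ideal x lies on a geodesic from a to b iff a :&: b \subset x \subset a :|: b.
   For nested cubes C(A, M), C(B, N) this makes C(J, K) lie in the interval iff
   J \subset B and A :\: (M :|: N) \subset J :\: K.  Such a cube can always be
   enlarged to C(J :|: A, K :|: symdiff J A) inside the interval (the hypothesis
   B :\: A \subset N keeps the new directions maximal), so a maximal cube coincides
   with its enlargement, one of whose vertices is A. *)

Lemma ex_minimal (T : finType) (r : rel T) (S : {set T}) :
  transitive r -> irreflexive r -> S != set0 ->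
  exists2 m, m \in S & forall y, y \in S -> ~~ r y m.
Proof.
move=> rtr rirr /set0Pn [x0 x0S].
have [m mS minm] := arg_minnP (fun z => #|[set y | r y z]|) x0S.
exists m => // y yS; apply/negP => rym.
have := minm y yS; rewrite leqNgt => /negP; apply.
apply: proper_card; apply/properP; split.
  by apply/subsetP => z; rewrite !inE => rzy; exact: rtr rzy rym.
by exists y; rewrite !inE ?rym ?rirr.
Qed.

Section SymmetricDifference.
Variable T : finType.
Implicit Types (a b u v w x : {set T}).

Definition symdiff u v := (u :\: v) :|: (v :\: u).

Definition between a x b := (a :&: b \subset x) && (x \subset a :|: b).

Lemma symdiff_eq0 u v : (symdiff u v == set0) = (u == v).
Proof.
apply/eqP/eqP => [/setP E | ->]; last by rewrite /symdiff setDv setU0.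
by apply/setP => y; move: (E y); rewrite !inE; case: (y \in u); case: (y \in v).
Qed.

Lemma symdiff_triangle u v w : #|symdiff u w| <= #|symdiff u v| + #|symdiff v w|.
Proof.
apply: leq_trans (leq_card_setU _ _); apply: subset_leq_card.
by apply/subsetP => y; rewrite !inE; case: (y \in u); case: (y \in v); case: (y \in w).
Qed.

Lemma symdiff_betweenE a x b :
  (symdiff a x :&: symdiff x b == set0) = between a x b.
Proof.
apply/eqP/andP => [E | [/subsetP lo /subsetP hi]].
  split; apply/subsetP => y; move/setP/(_ y): E; rewrite !inE;
    by case: (y \in a); case: (y \in b); case: (y \in x).
apply/setP => y; move: (lo y) (hi y); rewrite !inE => /implyP + /implyP.
by case: (y \in a); case: (y \in b); case: (y \in x).
Qed.

Lemma card_symdiff_between a x b : between a x b ->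
  #|symdiff a b| = #|symdiff a x| + #|symdiff x b|.
Proof.
rewrite -symdiff_betweenE => /eqP disj; rewrite -cardsUI disj cards0 addn0.
congr #|pred_of_set _|; apply/setP => y; move/setP/(_ y): disj; rewrite !inE.
by case: (y \in a); case: (y \in b); case: (y \in x).
Qed.

Lemma between_card_symdiff a x b :
  #|symdiff a x| + #|symdiff x b| <= #|symdiff a b| -> between a x b.
Proof.
move=> le; rewrite -symdiff_betweenE -cards_eq0 -leqn0.
have sub : symdiff a b \subset symdiff a x :|: symdiff x b.
  by apply/subsetP => y; rewrite !inE; case: (y \in a); case: (y \in b); case: (y \in x).
have := subset_leq_card sub; have := cardsUI (symdiff a x) (symdiff x b); lia.
Qed.

End SymmetricDifference.

Section IdealsAndGeodesics.
Local Open Scope order_scope.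
Variables (d : Order.disp_t) (Q : finPOrderType d).
Implicit Types (a b u v w I J : {set Q}).

Lemma idealP I : reflect (forall x y, y <= x -> x \in I -> y \in I) (order_ideal I).
Proof.
apply: (iffP forallP) => [idI x y le xI | idI x].
  by move/forallP: (idI x) => /(_ y) /implyP; apply; rewrite le xI.
by apply/forallP => y; apply/implyP => /andP [le xI]; exact: idI le xI.
Qed.

Lemma maxelP I z : reflect (z \in I /\ forall y, y \in I -> ~~ (z < y)) (z \in maxel I).
Proof.
rewrite inE; apply: (iffP andP) => [[zI /forall_inP zmax] | [zI zmax]] //.
by split => //; apply/forall_inP.
Qed.

Lemma cube_verticesP (c : cube Q) (x : {set Q}) :
  reflect (exists2 S : {set Q}, S \subset c.2 & x = c.1 :\: S) (x \in cube_vertices c).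
Proof.
apply: (iffP imsetP) => [[S] | [S]]; rewrite ?powersetE => SM ->;
  by exists S; rewrite ?powersetE.
Qed.

Lemma cube_vertices_top (c : cube Q) : c.1 \in cube_vertices c.
Proof. by apply/cube_verticesP; exists set0; rewrite ?sub0set ?setD0. Qed.

Lemma order_idealU I J : order_ideal I -> order_ideal J -> order_ideal (I :|: J).
Proof.
move=> /idealP idI /idealP idJ; apply/idealP => x y le; rewrite !inE.
by case/orP => [/(idI x y le) | /(idJ x y le)] ->; rewrite ?orbT.
Qed.

Lemma order_ideal_vertex (c : cube Q) (x : {set Q}) :
  is_cube c -> x \in cube_vertices c -> order_ideal x.
Proof.
case/andP => /idealP idI /subsetP Mmax /cube_verticesP [S /subsetP SM ->].
apply/idealP => z y le; rewrite !inE => /andP [zS zI].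
rewrite (idI z y le zI) andbT; apply: contraNN zS => yS.
have /maxelP [_ ymax] := Mmax y (SM y yS).
by move: (ymax z zI); rewrite lt_neqAle le andbT negbK => /eqP <-.
Qed.

Lemma order_idealD1 I m : order_ideal I -> m \in maxel I -> order_ideal (I :\ m).
Proof.
move=> idI mmax; apply: (order_ideal_vertex (c := (I, [set m]))).
  by rewrite /is_cube idI sub1set.
by apply/cube_verticesP; exists [set m].
Qed.

Lemma order_idealU1 I m :
  order_ideal I -> (forall y, y < m -> y \in I) -> order_ideal (m |: I).
Proof.
move=> /idealP idI below; apply/idealP => x y le; rewrite !inE.
case/orP => [/eqP exm | /(idI x y le) -> //]; last by rewrite orbT.
by move: le; rewrite exm le_eqVlt => /orP [-> // | /below ->]; rewrite orbT.
Qed.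

Lemma maxelS I J z : I \subset J -> z \in I -> z \in maxel J -> z \in maxel I.
Proof.
move=> /subsetP IJ zI /maxelP [_ zmax]; apply/maxelP; split => // y /IJ; exact: zmax.
Qed.

Lemma maxelU I J z : z \in maxel I -> z \in maxel J -> z \in maxel (I :|: J).
Proof.
move=> /maxelP [zI Imax] /maxelP [_ Jmax]; apply/maxelP; split; first by rewrite inE zI.
by move=> y; rewrite inE => /orP [/Imax | /Jmax].
Qed.

Lemma maxelU_notin I J z :
  order_ideal I -> z \notin I -> z \in maxel J -> z \in maxel (I :|: J).
Proof.
move=> /idealP idI zI /maxelP [zJ Jmax]; apply/maxelP; split; first by rewrite inE zJ orbT.
move=> y; rewrite inE => /orP [yI | /Jmax //].
by apply: contraNN zI => /ltW /(idI y z); apply.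
Qed.

Lemma adjC : symmetric (@adj _ Q).
Proof.
suff adj_sym J J' : adj J J' -> adj J' J by move=> J J'; apply/idP/idP; exact: adj_sym.
case/existsP => c /andP [/and3P [cc c1 /eqP cv] neq].
by apply/existsP; exists c; rewrite cc c1 cv setUC eqxx eq_sym.
Qed.

Lemma adj_setD1 I m : order_ideal I -> m \in maxel I -> adj I (I :\ m).
Proof.
move=> idI mmax; apply/existsP; exists (I, [set m]).
rewrite /is_cube idI sub1set mmax cards1 /cube_vertices powerset1 imsetU1 imset_set1.
rewrite /= setD0 eqxx /=; apply/eqP => /setP/(_ m).
by rewrite setD11; case/maxelP: mmax => ->.
Qed.

Lemma card_symdiff_adj J J' : adj J J' -> #|symdiff J J'| = 1%N.
Proof.
case/existsP => c /andP [/and3P [_ /cards1P [m cm] /eqP cv] neq].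
have vert I : I \in [set J; J'] -> I = c.1 \/ I = c.1 :\ m.
  rewrite -cv => /cube_verticesP [S]; rewrite cm subset1.
  by case/orP => /eqP -> ->; [right | left; rewrite setD0].
have sub : symdiff J J' \subset [set m].
  apply/subsetP => y; rewrite !inE; case: (y =P m) => // /eqP ym.
  have memc I : I \in [set J; J'] -> (y \in I) = (y \in c.1).
    by case/vert => ->; rewrite // !inE ym.
  by rewrite !memc ?setU11 ?inE ?eqxx ?orbT //; case: (y \in c.1).
apply/eqP; rewrite eqn_leq card_gt0 symdiff_eq0 neq andbT -(cards1 m).
exact: subset_leq_card.
Qed.

Lemma epath_size u p v : epath u p v -> (#|symdiff u v| <= size p)%N.
Proof.
elim: p u => [|x p IH] u [/= pth lst]; first by rewrite -lst /symdiff setDv set0U cards0.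
case/andP: pth => ux pth; apply: leq_trans (symdiff_triangle u x _) _.
by rewrite card_symdiff_adj // add1n ltnS; apply: IH.
Qed.

Lemma epath_cat u p w q v : epath u p w -> epath w q v -> epath u (p ++ q) v.
Proof. by case=> pp <- [pq <-]; split; rewrite ?cat_path ?last_cat ?pp. Qed.

(* Remove a maximal element of [u :\: v], or else add a minimal element of [v :\: u]. *)
Lemma adj_step u v : order_ideal u -> order_ideal v -> symdiff u v != set0 ->
  exists w, [/\ order_ideal w, adj u w & #|symdiff w v| = #|symdiff u v|.-1].
Proof.
move=> idu idv neq.
suff [m [w [md idw uw dw]]] : exists m w,
    [/\ m \in symdiff u v, order_ideal w, adj u w & symdiff w v = symdiff u v :\ m].
  by exists w; rewrite dw (cardsD1 m (symdiff u v)) md.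
case: (boolP (u :\: v == set0)) => [/eqP uv0 | uv0].
  have vu0 : v :\: u != set0 by rewrite /symdiff uv0 set0U in neq.
  have [m] := ex_minimal (@lt_trans _ _) (@ltxx _ _) vu0.
  rewrite inE => /andP [mu mv] mmin.
  have idw : order_ideal (m |: u).
    apply: order_idealU1 => // y ym; have yv := idealP _ idv m y (ltW ym) mv.
    by apply: contraTT ym => yu; apply: mmin; rewrite !inE yu yv.
  have mmaxw : m \in maxel (m |: u).
    apply/maxelP; split => [|y]; first exact: setU11.
    rewrite !inE => /orP [/eqP -> | yu]; first by rewrite ltxx.
    by apply: contraNN mu => /ltW my; exact: (idealP _ idu y m my yu).
  exists m, (m |: u); split => //.
  - by rewrite !inE mu mv orbT.
  - by rewrite adjC -{2}(setU1K mu); exact: adj_setD1.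
  - apply/setP => y; move/setP/(_ y): uv0; rewrite !inE.
    by case: (y =P m) => [->|]; rewrite ?(negbTE mu) ?mv //=; case: (y \in u); case: (y \in v).
have [m] := ex_minimal (r := fun x y => y < x) (fun y x z xy yz => lt_trans yz xy) (@ltxx _ _) uv0.
rewrite inE => /andP [mv mu] mmax.
have mmaxu : m \in maxel u.
  apply/maxelP; split => // y yu; apply/negP => my.
  case: (boolP (y \in v)) => yv; first by move: mv; rewrite (idealP _ idv y m (ltW my) yv).
  by have := mmax y; rewrite inE yv yu my => /(_ isT).
exists m, (u :\ m); split.
- by rewrite !inE mu mv.
- exact: order_idealD1.
- exact: adj_setD1.
- apply/setP => y; rewrite !inE.
  by case: (y =P m) => [->|]; rewrite ?mu ?(negbTE mv) //=; case: (y \in u); case: (y \in v).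
Qed.

Lemma epath_exists u v : order_ideal u -> order_ideal v ->
  exists p, epath u p v /\ size p = #|symdiff u v|.
Proof.
move=> idu idv; move dn : #|symdiff u v| => n.
elim: n u idu dn => [|n IH] u idu dn.
  exists [::]; split => //; split => //=; apply/setP => y.
  move/cards0_eq/setP/(_ y): dn; rewrite !inE; by case: (y \in u); case: (y \in v).
have [|w [idw uw dw]] := adj_step idu idv; first by rewrite -card_gt0 dn.
have [p [[pth lst] sz]] := IH w idw (etrans dw (congr1 predn dn)).
by exists (w :: p); split; [split; rewrite /= ?uw | rewrite /= sz].
Qed.

Lemma geodesic_size u p v : order_ideal u -> order_ideal v ->
  geodesic u p v -> size p = #|symdiff u v|.
Proof.
move=> idu idv [up pmin]; have [q [uq sq]] := epath_exists idu idv.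
by apply/eqP; rewrite eqn_leq (epath_size up) andbT -sq pmin.
Qed.

Lemma on_geodesicP a b (x : {set Q}) :
  order_ideal a -> order_ideal b -> order_ideal x ->
  on_geodesic x a b <-> between a x b.
Proof.
move=> ida idb idx; split.
  case=> p [geo xp]; move: geo; case/splitPl: xp => p1 p2 lst1 geo.
  have sz := geodesic_size ida idb geo; case: geo => [[pth lst] _].
  move: pth lst; rewrite cat_path last_cat lst1 => /andP [pth1 pth2] lst2.
  by apply: between_card_symdiff; rewrite -sz size_cat leq_add // epath_size.
move=> bx; have [p1 [ax sz1]] := epath_exists ida idx.
have [p2 [xb sz2]] := epath_exists idx idb.
exists (p1 ++ p2); split; last by case: ax => _ <-; rewrite -cat_cons mem_cat mem_last.
split; first exact: epath_cat ax xb.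
by move=> q aqb; rewrite size_cat sz1 sz2 -card_symdiff_between // epath_size.
Qed.

End IdealsAndGeodesics.

Section Interval.
Local Open Scope order_scope.
Variables (d : Order.disp_t) (Q : finPOrderType d) (A M B N : {set Q}).
Hypotheses (cubeAM : is_cube (A, M)) (cubeBN : is_cube (B, N)) (AB : A \subset B).

Lemma on_geodesic_cubesP (x : {set Q}) : order_ideal x ->
  (exists a b, [/\ a \in cube_vertices (A, M), b \in cube_vertices (B, N)
                 & on_geodesic x a b])
  <-> x \subset B /\ A :\: (M :|: N) \subset x.
Proof.
move=> idx; split.
  case=> a [b [aC bD]]; rewrite on_geodesicP ?(order_ideal_vertex cubeAM aC)
    ?(order_ideal_vertex cubeBN bD) //.
  case/cube_verticesP: aC => S /subsetP /= SM ->.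
  case/cube_verticesP: bD => T /subsetP /= TN ->.
  case/andP => /subsetP lo /subsetP hi; split; apply/subsetP => y.
    by move/hi; rewrite !inE => /orP [/andP [_ /(subsetP AB)] | /andP []].
  rewrite !inE negb_or => /andP [/andP [yM yN] yA]; apply: lo.
  by rewrite !inE yA (subsetP AB y yA) (contra (SM y) yM) (contra (TN y) yN).
case=> /subsetP xB /subsetP Ax.
have aC : A :\: (M :\: x) \in cube_vertices (A, M).
  by apply/cube_verticesP; exists (M :\: x); rewrite ?subsetDl.
have bD : B :\: (N :\: x) \in cube_vertices (B, N).
  by apply/cube_verticesP; exists (N :\: x); rewrite ?subsetDl.
exists (A :\: (M :\: x)), (B :\: (N :\: x)); split => //.
apply/on_geodesicP; rewrite ?(order_ideal_vertex cubeAM aC)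
  ?(order_ideal_vertex cubeBN bD) //.
apply/andP; split; apply/subsetP => y; rewrite !inE; last first.
  by move=> yx; rewrite yx (xB y yx) orbT.
case: (boolP (y \in x)) => //= yx /andP [/andP [yM yA] /andP [yN _]].
by move: yx; rewrite Ax // !inE negb_or yM yN.
Qed.

Lemma in_intervalE (J K : {set Q}) :
  in_interval (A, M) (B, N) (J, K) <->
  [/\ is_cube (J, K), J \subset B & A :\: (M :|: N) \subset J :\: K].
Proof.
split.
  case=> cJK vert.
  have vertB x : x \in cube_vertices (J, K) -> x \subset B /\ A :\: (M :|: N) \subset x.
    by move=> xv; apply/(on_geodesic_cubesP (order_ideal_vertex cJK xv)); exact: vert.
  have JKv : J :\: K \in cube_vertices (J, K) by apply/cube_verticesP; exists K.
  by have [[JB _] [_ AJK]] := (vertB _ (cube_vertices_top _), vertB _ JKv).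
case=> cJK JB AJK; split => // x xv; apply/on_geodesic_cubesP.
  exact: order_ideal_vertex xv.
case/cube_verticesP: xv => U /= UK ->; split.
  exact: subset_trans (subsetDl _ _) JB.
exact: subset_trans AJK (setDS _ UK).
Qed.

Hypothesis BAN : B :\: A \subset N.

Lemma is_cube_setU_symdiff J K : in_interval (A, M) (B, N) (J, K) ->
  is_cube (J :|: A, K :|: symdiff J A).
Proof.
case/in_intervalE => /andP [/= idJ /subsetP KJ] JB /subsetP AJK.
have /andP [/= idA /subsetP MA] := cubeAM; have /andP [_ /subsetP NB] := cubeBN.
have MN z : z \in A -> z \notin J :\: K -> (z \in M) || (z \in N).
  by move=> zA; apply: contraR => zMN; apply: AJK; rewrite !inE zMN zA.
have Nmax z : z \in N -> z \in J :|: A -> z \in maxel (J :|: A).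
  by move=> zN zJA; apply: maxelS zJA (NB z zN); rewrite subUset JB AB.
rewrite /is_cube /= order_idealU //=; apply/subsetP => z.
case/setUP => [zK | /setUP [/setDP [zJ zA] | /setDP [zA zJ]]].
- have [zA | zA] := boolP (z \in A); last by rewrite setUC maxelU_notin ?KJ.
  have /orP [zM | zN] : (z \in M) || (z \in N) by rewrite MN // inE zK.
    by rewrite maxelU ?KJ ?MA.
  by rewrite Nmax // inE zA orbT.
- by rewrite Nmax // ?inE ?zJ // (subsetP BAN) // inE zA (subsetP JB).
- have /orP [zM | zN] : (z \in M) || (z \in N) by rewrite MN // inE (negbTE zJ) andbF.
    by rewrite maxelU_notin ?MA.
  by rewrite Nmax // inE zA orbT.
Qed.

Lemma maximal_in_interval_vertex E :
  maximal_in_interval (A, M) (B, N) E -> A \in cube_vertices E.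
Proof.
case: E => J K [intJK Emax]; have /in_intervalE [_ JB /subsetP AJK] := intJK.
have intJK' : in_interval (A, M) (B, N) (J :|: A, K :|: symdiff J A).
  apply/in_intervalE; split; first exact: is_cube_setU_symdiff.
    by rewrite subUset JB AB.
  apply/subsetP => y yA; have := AJK y yA; move: yA; rewrite !inE.
  by case: (y \in A); case: (y \in J); case: (y \in K); rewrite ?andbF.
have sub : cube_vertices (J, K) \subset cube_vertices (J :|: A, K :|: symdiff J A).
  apply/subsetP => _ /cube_verticesP [U /= UK ->]; apply/cube_verticesP.
  exists (U :|: (A :\: J)); first by rewrite setUSS // subsetUr.
  by apply/setP => y; rewrite !inE; case: (y \in J); case: (y \in A); case: (y \in U).
rewrite -(Emax _ intJK' sub); apply/cube_verticesP; exists (J :\: A) => /=.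
  by rewrite subsetU // subsetUl orbT.
by apply/setP => y; rewrite !inE; case: (y \in J); case: (y \in A).
Qed.

End Interval.

Theorem lemma5p3 (d : Order.disp_t) (Q : finPOrderType d)
  (s : seq (cube Q)) (i : nat) :
  valid_cube_seq s -> i.+1 < size s ->
  forall E : cube Q,
    maximal_in_interval (nth (set0, set0) s i) (nth (set0, set0) s i.+1) E ->
    (nth (set0, set0) s i).1 \in cube_vertices E.
Proof.
(* Only conditions (a) and (b) of validity are used. *)
move=> [_ cubes [sortedI _] [_ newM] _] lti E.
have cube_nth j : j < size s -> is_cube (nth (set0, set0) s j).
  exact: (all_nthP _ cubes) j.
have sub : (nth (set0, set0) s i).1 \subset (nth (set0, set0) s i.+1).1.
  have := (sortedP set0 sortedI) i; rewrite size_map => /(_ lti).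
  by rewrite !(nth_map (set0, set0)) ?(ltnW lti) // => /properP [].
have := newM i.+1; rewrite lti => /(_ isT) /=.
move: (cube_nth i (ltnW lti)) (cube_nth i.+1 lti) sub.
case: (nth _ s i) => A M; case: (nth _ s i.+1) => B N /=.
move=> cubeAM cubeBN AB BAN; exact: maximal_in_interval_vertex.
Qed.
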